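(* Let $N\ge1$, $n\ge1$, let $P(z_1,\dots,z_n)$ be a symmetric Laurent polynomial, regarded as a multiplication operator on $F_{N,n}$, and let $\omega_*$ be as in the context. Then for every $f\in F_{N,n}$, $$\omega_*(Pf)=P(x_1^{-N},\dots,x_n^{-N})\,\omega_*(f).$$
   Context: For $k\in\mathbb Z$, $\underline{k}\in\{1,\dots,N\}$, $\overline{k}\in\mathbb Z$ unique with $k=\underline{k}-N\overline{k}$. $V=\mathbb C^N$ with basis $v_1,\dots,v_N$. On $\mathbb C[z_1^{\pm1},\dots,z_n^{\pm1}]\otimes V^{\otimes n}$, $K_{ij}$ swaps $z_i,z_j$ and $P_{ij}$ swaps the $i$-th and $j$-th factors of $V^{\otimes n}$; $F_{N,n}=\{f:K_{ij}f=-P_{ij}f\ \forall i\neq j\}$. For $k\in\mathbb Z^n$, $\hat u_k=\sum_{w\in S_n}\mathrm{sign}(w)z_1^{\overline{k_{w(1)}}}\cdots z_n^{\overline{k_{w(n)}}}\otimes v_{\underline{k_{w(1)}}}\otimes\cdots\otimes v_{\underline{k_{w(n)}}}$; the $\hat u_k$ with $k_1>\dots>k_n$ form a basis of $F_{N,n}$. For $k\in\mathbb Z^n$, $\hat a_k=\sum_{w\in S_n}\mathrm{sign}(w)x_{w(1)}^{k_1}\cdots x_{w(n)}^{k_n}$, a skew-symmetric Laurent polynomial in $x_1,\dots,x_n$. $\omega_*$ is the linear isomorphism from $F_{N,n}$ onto the space of skew-symmetric Laurent polynomials in $x_1,\dots,x_n$ with $\omega_*(\hat u_k)=\hat a_k$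 for $k_1>\dots>k_n$. *)

From mathcomp Require Import all_boot all_order all_algebra all_fingroup.
Set Implicit Arguments. Unset Strict Implicit. Unset Printing Implicit Defensive.
Import Order.TTheory GRing.Theory Num.Theory.
Local Open Scope ring_scope.

(* Exponent vectors (a_1,...,a_n) in Z^n, for monomials z^a or x^k. *)
Definition exps (n : nat) := {ffun 'I_n -> int}.
(* Label vectors (c_1,...,c_n) with c_i in {1,...,N}, indexing v_{c_1}⊗...⊗v_{c_n};
   labels outside {1..N} are forced to have coefficient 0 (see [inSpace]). *)
Definition labels (n : nat) := {ffun 'I_n -> nat}.

(* An element of C[z^{±1}] ⊗ V^{⊗n}: its coefficient f a c on z^a ⊗ v_c. *)
Definition tensorFun (K : Type) (n : nat) := exps n -> labels n -> K.

(* Membership in the ambient space C[z_1^{±1},...,z_n^{±1}] ⊗ V^{⊗n}: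
   finite support in z, and labels in {1..N}. *)
Definition inSpace (K : fieldType) (N n : nat) (f : tensorFun K n) : Prop :=
  (exists sa : seq (exps n), forall a c, f a c != 0 -> a \in sa) /\
  (forall a c, f a c != 0 -> forall i, (0 < c i <= N)%N).

Definition Kswap (K : Type) n (i j : 'I_n) (f : tensorFun K n) : tensorFun K n :=
  fun a c => f [ffun t => a (tperm i j t)] c.
Definition Pswap (K : Type) n (i j : 'I_n) (f : tensorFun K n) : tensorFun K n :=
  fun a c => f a [ffun t => c (tperm i j t)].

Definition inF (K : fieldType) (N n : nat) (f : tensorFun K n) : Prop :=
  inSpace N f /\
  forall i j : 'I_n, i != j -> forall a c, Kswap i j f a c = - Pswap i j f a c.

(* k = under k - N * over k with under k in {1..N}. *)
Definition under (N : nat) (k : int) : nat := (absz ((k - 1) %% (N%:Z))%Z).+1.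
Definition over (N : nat) (k : int) : int := - ((k - 1) %/ (N%:Z))%Z.

Definition sgn (K : fieldType) n (w : 'S_n) : K := (-1) ^+ (odd_perm w).

Definition uhat (K : fieldType) (N n : nat) (k : exps n) : tensorFun K n :=
  fun a c => \sum_(w : 'S_n)
     sgn K w * ((a == [ffun i => over N (k (w i))])
                && (c == [ffun i => under N (k (w i))]))%:R.

(* A Laurent polynomial in x_1..x_n, as its coefficient function. *)
Definition xpoly (K : Type) (n : nat) := exps n -> K.

(* \hat a_k = \sum_w sign(w) x_{w(1)}^{k_1} ... x_{w(n)}^{k_n}:
   the monomial has exponent e with e (w j) = k j, i.e. e = k ∘ w^{-1}. *)
Definition ahat (K : fieldType) (n : nat) (k : exps n) : xpoly K n :=
  fun e => \sum_(w : 'S_n) sgn K w * (e == [ffun i => k ((w^-1)%g i)])%:R.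

Definition decreasing n (k : exps n) : Prop :=
  forall i j : 'I_n, (i < j)%N -> k j < k i.

(* A Laurent polynomial P(z) = \sum_{(d,e) in s} d z^e, given by a finite list. *)
Definition lcoef (K : fieldType) n (s : seq (K * exps n)) (e : exps n) : K :=
  \sum_(p <- s) (p.2 == e)%:R * p.1.

Definition symmetricL (K : fieldType) n (s : seq (K * exps n)) : Prop :=
  forall (w : 'S_n) (e : exps n), lcoef s [ffun i => e (w i)] = lcoef s e.

Definition mulP (K : fieldType) n (s : seq (K * exps n)) (f : tensorFun K n)
  : tensorFun K n :=
  fun a c => \sum_(p <- s) p.1 * f [ffun i => a i - p.2 i] c.

(* Multiplication by P(x_1^{-N},...,x_n^{-N}) on Laurent polynomials in x. *)
Definition mulPx (K : fieldType) (N : nat) n (s : seq (K * exps n)) (g : xpoly K n)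
  : xpoly K n :=
  fun k => \sum_(p <- s) p.1 * g [ffun i => k i + (N%:Z) * p.2 i].

From Pilot Require Import Defs.
From mathcomp Require Import all_boot all_order all_algebra all_fingroup.
From mathcomp Require Import ring zify.
From Stdlib Require Import FunctionalExtensionality.

(* Both û_k and â_k are alternating sums over S_n, so ω(û_k) = â_k holds for
   every k, not only decreasing ones: sorting k changes both sides by the same
   sign, and both vanish when k has a repeated entry.  Antisymmetry lets one
   write every f in F_{N,n} as the finite combination
   Σ_(a,c) f(a,c)/n! · û_(c - N a).  Multiplying the w-th term of û_k by z^e
   gives the w-th term of û_(k - N e∘w^-1), since z^e only moves the `over`
   part of the index; as P is symmetric, the permuted exponent e∘w^-1 may be
   replaced by e, so P û_k = Σ_e p_e û_(k - N e).  The same computation gives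
   P(x^-N) â_k = Σ_e p_e â_(k - N e), and linearity of ω concludes. *)

Set Implicit Arguments. Unset Strict Implicit. Unset Printing Implicit Defensive.
Import Order.TTheory GRing.Theory Num.Theory.
Local Open Scope ring_scope.

Section OverUnder.
Variable N : nat.

Lemma under_shift (x y : int) : Defs.under N (x - N%:Z * y) = Defs.under N x.
Proof.
rewrite /Defs.under.
have -> : x - N%:Z * y - 1 = (- y) * N%:Z + (x - 1) by ring.
by rewrite modzMDl.
Qed.

Hypothesis N_gt0 : (0 < N)%N.

Lemma over_shift (x y : int) : Defs.over N (x - N%:Z * y) = Defs.over N x + y.
Proof.
rewrite /Defs.over.
have -> : x - N%:Z * y - 1 = (- y) * N%:Z + (x - 1) by ring.
rewrite divzMDl; last by case: N N_gt0.
by rewrite opprD opprK addrC.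
Qed.

Lemma under_range (x : int) : (0 < Defs.under N x <= N)%N.
Proof.
rewrite /Defs.under /=.
have h0 : (0 <= (x - 1) %% N%:Z)%Z by rewrite modz_ge0 //; case: N N_gt0.
have h1 : ((x - 1) %% N%:Z < N%:Z)%Z by rewrite ltz_pmod.
by move: h0 h1; case: ((x - 1) %% N%:Z)%Z => // m _; rewrite ltz_nat.
Qed.

Lemma over_label (c : nat) : (0 < c <= N)%N -> Defs.over N c%:Z = 0.
Proof.
move=> /andP[c_gt0 c_leN]; rewrite /Defs.over divz_small ?oppr0 //.
rewrite subr_ge0 gtz0_abs; last by rewrite ltz_nat (leq_trans c_gt0).
by rewrite -[c%:Z]/(Posz c) -[N%:Z]/(Posz N); lia.
Qed.

Lemma under_label (c : nat) : (0 < c <= N)%N -> Defs.under N c%:Z = c.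
Proof.
move=> /andP[c_gt0 c_leN]; rewrite /Defs.under modz_small.
  by case: c c_gt0 {c_leN} => // c _; rewrite intS addrC addKr.
lia.
Qed.

End OverUnder.

Section ComposePerm.
Variable n : nat.

Definition comp_perm {T : Type} (e : {ffun 'I_n -> T}) (w : 'S_n) : {ffun 'I_n -> T} :=
  [ffun i => e (w i)].

Lemma comp_permM T (e : {ffun 'I_n -> T}) x y :
  comp_perm e (x * y)%g = comp_perm (comp_perm e y) x.
Proof. by apply/ffunP => i; rewrite !ffunE permM. Qed.

Lemma comp_perm1 T (e : {ffun 'I_n -> T}) : comp_perm e 1%g = e.
Proof. by apply/ffunP => i; rewrite !ffunE perm1. Qed.

Lemma comp_permK T (e : {ffun 'I_n -> T}) w : comp_perm (comp_perm e w) w^-1%g = e.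
Proof. by rewrite -comp_permM mulVg comp_perm1. Qed.

Lemma comp_perm_inj T (w : 'S_n) : injective (fun e : {ffun 'I_n -> T} => comp_perm e w).
Proof. by move=> e e' /(congr1 (comp_perm^~ w^-1%g)); rewrite !comp_permK. Qed.

Lemma comp_perm_eqV (T : eqType) (e e' : {ffun 'I_n -> T}) w :
  (comp_perm e w == e') = (e == comp_perm e' w^-1%g).
Proof.
by apply/eqP/eqP => [<- | ->]; rewrite ?comp_permK // -comp_permM mulgV comp_perm1.
Qed.

Lemma comp_perm_tperm T (e : {ffun 'I_n -> T}) (i j : 'I_n) :
  e i = e j -> comp_perm e (tperm i j) = e.
Proof. by move=> eij; apply/ffunP => x; rewrite ffunE; case: tpermP => // ->. Qed.

End ComposePerm.

Section Signs.
Variables (K : numFieldType) (n : nat).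
Implicit Types w t : 'S_n.

Lemma sgnM w t : sgn K (w * t)%g = sgn K w * sgn K t.
Proof. by rewrite /sgn odd_permM signr_addb. Qed.

Lemma sgnV w : sgn K w^-1%g = sgn K w.
Proof. by rewrite /sgn odd_permV. Qed.

Lemma sgn_mulss w : sgn K w * sgn K w = 1.
Proof. by rewrite /sgn -signr_addb addbb. Qed.

Lemma sgn_tperm (i j : 'I_n) : i != j -> sgn K (tperm i j) = -1.
Proof. by move=> neq_ij; rewrite /sgn odd_tperm neq_ij expr1. Qed.

Lemma sum_sgn_eq0 (F : 'S_n -> K) t : odd_perm t ->
  (forall w, F (w * t)%g = F w) -> \sum_(w : 'S_n) sgn K w * F w = 0.
Proof.
move=> odd_t Ft; set S := \sum_(w : 'S_n) _.
have S_opp : S = - S.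
  rewrite {1}/S (reindex_inj (mulIg t)) /= -sumrN; apply: eq_bigr => w _.
  by rewrite Ft sgnM /sgn odd_t expr1 mulrN1 mulNr.
have : S *+ 2 == 0 by rewrite mulr2n {1}S_opp addNr.
by rewrite mulrn_eq0 /= => /eqP.
Qed.

End Signs.

Section Alternant.
Variables (K : numFieldType) (n : nat) (X : eqType) (phi : exps n -> X).

Definition alt (k : exps n) (x : X) : K :=
  \sum_(w : 'S_n) sgn K w * (x == phi (comp_perm k w))%:R.

Lemma alt_comp_perm (k : exps n) t x : alt (comp_perm k t) x = sgn K t * alt k x.
Proof.
rewrite /alt mulr_sumr (reindex_inj (mulIg t^-1%g)) /=.
by apply: eq_bigr => w _; rewrite -comp_permM mulgKV sgnM sgnV -mulrA mulrCA.
Qed.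

Lemma alt_eq0 (k : exps n) (i j : 'I_n) x : i != j -> k i = k j -> alt k x = 0.
Proof.
move=> neq_ij kij; apply: (sum_sgn_eq0 (t := tperm i j)); first by rewrite odd_tperm.
by move=> w; rewrite comp_permM comp_perm_tperm.
Qed.

Lemma alt_neq0 (k : exps n) x : alt k x != 0 -> exists w, x = phi (comp_perm k w).
Proof.
case: (pickP (fun w => x == phi (comp_perm k w))) => [w /eqP -> _ | no_w]; first by exists w.
by rewrite /alt big1 ?eqxx // => w _; rewrite no_w mulr0.
Qed.

End Alternant.

Section SortPerm.
Variable n : nat.

Definition rank_dec (k : exps n) (i : 'I_n) : nat := #|[set j | k i < k j]|.

Lemma rank_dec_lt (k : exps n) i : (rank_dec k i < n)%N.
Proof.
rewrite -[n in (_ < n)%N]card_ord -cardsT; apply: proper_card; rewrite properT.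
by apply/eqP => /setP /(_ i); rewrite !inE ltxx.
Qed.

Lemma rank_dec_mono (k : exps n) x y : k x < k y -> (rank_dec k y < rank_dec k x)%N.
Proof.
move=> lt_xy; apply: proper_card; apply/properP; split.
  by apply/subsetP => j; rewrite !inE => /(lt_trans lt_xy).
by exists y; rewrite !inE ?lt_xy // ltxx.
Qed.

Lemma sort_perm_decreasing (k : exps n) :
  injective k -> exists w : 'S_n, decreasing (comp_perm k w).
Proof.
move=> k_inj; pose r i : 'I_n := Ordinal (rank_dec_lt k i).
have r_inj : injective r.
  move=> x y /(congr1 val) /= rxy; apply: k_inj.
  by case: (ltgtP (k x) (k y)) => // /rank_dec_mono; rewrite rxy ltnn.
exists (perm r_inj)^-1%g => i j lt_ij; rewrite !ffunE.
have rK z : r ((perm r_inj)^-1%g z) = z by rewrite -[r _]permE permKV.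
case: (ltgtP (k _) (k _)) => // [/rank_dec_mono | /k_inj eq_ij].
  by rewrite -[rank_dec k _]/(val (r _)) -[rank_dec k _]/(val (r _)) !rK ltnNge ltnW.
by move: lt_ij; rewrite -(rK i) -(rK j) eq_ij ltnn.
Qed.

End SortPerm.

Section Basis.
Variables (K : numFieldType) (N n : nat).
Hypothesis N_gt0 : (0 < N)%N.

(* [k] indexes z^(over k) ⊗ v_(under k), the leading term of û_k; [exps_of_zv]
   inverts this on labels in 1..N. *)
Definition zv_of_exps (k : exps n) : exps n * labels n :=
  ([ffun i => Defs.over N (k i)], [ffun i => Defs.under N (k i)]).

Definition exps_of_zv (x : exps n * labels n) : exps n :=
  [ffun i => (x.2 i)%:Z - N%:Z * x.1 i].

Lemma exps_of_zvK (x : exps n * labels n) :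
  (forall i, 0 < x.2 i <= N)%N -> zv_of_exps (exps_of_zv x) = x.
Proof.
case: x => a c /= c_lab; congr (_, _); apply/ffunP => i; rewrite !ffunE.
  by rewrite over_shift // over_label // add0r.
by rewrite under_shift under_label.
Qed.

Lemma zv_of_exps_comp_perm (k : exps n) w :
  zv_of_exps (comp_perm k w) = (comp_perm (zv_of_exps k).1 w, comp_perm (zv_of_exps k).2 w).
Proof. by congr (_, _); apply/ffunP => i; rewrite !ffunE. Qed.

Lemma uhatE (k : exps n) a c : uhat K N k a c = alt K zv_of_exps k (a, c).
Proof.
apply: eq_bigr => w _; rewrite xpair_eqE.
by congr (_ * ((a == _) && (c == _))%:R); apply/ffunP => i; rewrite !ffunE.
Qed.

Lemma ahatE (k e : exps n) : ahat K k e = alt K id k e.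
Proof.
rewrite /ahat /alt (reindex_inj invg_inj) /=; apply: eq_bigr => w _.
by rewrite sgnV invgK; congr (_ * (e == _)%:R); apply/ffunP => i; rewrite !ffunE.
Qed.

Definition antisymmetric (f : tensorFun K n) : Prop :=
  forall t a c, f (comp_perm a t) (comp_perm c t) = sgn K t * f a c.

Lemma uhat_antisymmetric (k : exps n) : antisymmetric (uhat K N k).
Proof.
move=> t a c; rewrite !uhatE /alt mulr_sumr (reindex_inj (mulgI t)) /=.
apply: eq_bigr => w _.
rewrite !zv_of_exps_comp_perm !comp_permM !xpair_eqE !(inj_eq (@comp_perm_inj _ _ t)).
by rewrite sgnM mulrA.
Qed.

Lemma antisymmetric_swap (f : tensorFun K n) : antisymmetric f ->
  forall i j : 'I_n, i != j -> forall a c, Kswap i j f a c = - Pswap i j f a c.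
Proof.
move=> f_anti i j neq_ij a c; rewrite /Kswap /Pswap.
rewrite -[in LHS](comp_permK c (tperm i j)) tpermV.
by rewrite [LHS]f_anti sgn_tperm // mulN1r.
Qed.

Lemma inF_antisymmetric (f : tensorFun K n) : inF N f -> antisymmetric f.
Proof.
move=> [_ f_swap].
have f_tperm i j a c : i != j ->
    f (comp_perm a (tperm i j)) (comp_perm c (tperm i j)) = - f a c.
  move=> neq_ij; rewrite -[in RHS](comp_permK c (tperm i j)) tpermV.
  exact: (f_swap i j neq_ij a (comp_perm c (tperm i j))).
move=> t; case: (prod_tpermP t) => ts -> {t}; elim: ts => [|t ts IH] /=.
  by move=> _ a c; rewrite big_nil !comp_perm1 /sgn odd_perm1 mul1r.
move=> /andP[neq_t /IH ts_anti] a c.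
by rewrite big_cons sgnM !comp_permM f_tperm // ts_anti sgn_tperm // mulN1r mulNr.
Qed.

Lemma uhat_inF (k : exps n) : inF N (uhat K N k).
Proof.
split; [split | exact/antisymmetric_swap/uhat_antisymmetric].
  exists [seq (zv_of_exps (comp_perm k w)).1 | w <- enum 'S_n] => a c.
  rewrite uhatE => /alt_neq0[w ac_w].
  by rewrite -[a]/((a, c).1) ac_w; apply/mapP; exists w; rewrite ?mem_enum.
move=> a c; rewrite uhatE => /alt_neq0[w ac_w] i.
by rewrite -[c]/((a, c).2) ac_w ffunE under_range.
Qed.

Lemma inF0 : inF N (fun (_ : exps n) (_ : labels n) => 0 : K).
Proof.
split; first split.
- by exists [::] => a c; rewrite eqxx.
- by move=> a c; rewrite eqxx.
- by move=> i j _ a c; rewrite /Kswap /Pswap oppr0.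
Qed.

Lemma inF_lin (f g : tensorFun K n) al be : inF N f -> inF N g ->
  inF N (fun a c => al * f a c + be * g a c).
Proof.
move=> [[[sf f_fin] f_lab] f_swap] [[[sg g_fin] g_lab] g_swap].
have fg_nz a c : al * f a c + be * g a c != 0 -> f a c != 0 \/ g a c != 0.
  have [-> | ] := eqVneq (f a c) 0; last by left.
  have [-> | ] := eqVneq (g a c) 0; last by right.
  by rewrite !mulr0 addr0 eqxx.
split; first split.
- exists (sf ++ sg) => a c /fg_nz[/f_fin | /g_fin]; by rewrite mem_cat => ->; rewrite ?orbT.
- by move=> a c /fg_nz[/f_lab | /g_lab].
- move=> i j neq_ij a c; rewrite /Kswap /Pswap.
  have := f_swap i j neq_ij a c; have := g_swap i j neq_ij a c; rewrite /Kswap /Pswap.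
  by move=> -> ->; rewrite !mulrN opprD.
Qed.

Definition usum (L : seq (K * exps n)) : tensorFun K n :=
  fun a c => \sum_(q <- L) q.1 * uhat K N q.2 a c.

Definition asum (L : seq (K * exps n)) : xpoly K n :=
  fun m => \sum_(q <- L) q.1 * ahat K q.2 m.

Lemma usum_nil : usum [::] = fun _ _ => 0.
Proof. by do 2!apply: functional_extensionality => ?; rewrite /usum big_nil. Qed.

Lemma usum_cons q L : usum (q :: L) = fun a c => q.1 * uhat K N q.2 a c + 1 * usum L a c.
Proof. by do 2!apply: functional_extensionality => ?; rewrite /usum big_cons mul1r. Qed.

Lemma usum_inF L : inF N (usum L).
Proof.
elim: L => [|q L IH]; first by rewrite usum_nil; apply: inF0.
by rewrite usum_cons; apply: inF_lin (uhat_inF _) IH.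
Qed.

End Basis.

Section Omega.
Variables (K : numFieldType) (N n : nat).
Hypothesis N_gt0 : (0 < N)%N.
Variable omega : tensorFun K n -> xpoly K n.
Hypothesis omega_lin : forall f g : tensorFun K n, inF N f -> inF N g -> forall al be : K,
  omega (fun a c => al * f a c + be * g a c) = (fun k => al * omega f k + be * omega g k).
Hypothesis omega_basis : forall k : exps n, decreasing k -> omega (uhat K N k) = ahat K k.

Lemma omega0 : omega (fun _ _ => 0) = fun _ => 0.
Proof.
have := omega_lin (inF0 K N n) (inF0 K N n) 0 0 => /=; rewrite mul0r (addr0 (0 : K)) => ->.
by apply: functional_extensionality => m; rewrite !mul0r addr0.
Qed.

Lemma omegaZ (f : tensorFun K n) al : inF N f ->
  omega (fun a c => al * f a c) = fun m => al * omega f m.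
Proof.
move=> f_F; have -> : (fun a c => al * f a c) = fun a c => al * f a c + 0 * (0 : K).
  by do 2!apply: functional_extensionality => ?; rewrite mul0r addr0.
rewrite (omega_lin f_F (inF0 K N n)).
by apply: functional_extensionality => m; rewrite mul0r addr0.
Qed.

Lemma omega_uhat (k : exps n) : omega (uhat K N k) = ahat K k.
Proof.
have [/existsP[i /existsP[j /andP[neq_ij /eqP kij]]] | k_inj] :=
  boolP [exists i, exists j, (i != j) && (k i == k j)].
  have -> : uhat K N k = fun _ _ => 0.
    by do 2!apply: functional_extensionality => ?; rewrite uhatE (alt_eq0 _ _ _ neq_ij kij).
  rewrite omega0; apply: functional_extensionality => e.
  by rewrite ahatE (alt_eq0 _ _ _ neq_ij kij).
have [w dec_kw] : exists w, decreasing (comp_perm k w).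
  apply: sort_perm_decreasing => x y kxy; apply/eqP; apply: contraNT k_inj => neq_xy.
  by apply/existsP; exists x; apply/existsP; exists y; rewrite neq_xy kxy eqxx.
have -> : uhat K N k = fun a c => sgn K w * uhat K N (comp_perm k w) a c.
  do 2!apply: functional_extensionality => ?.
  by rewrite !uhatE alt_comp_perm mulrA sgn_mulss mul1r.
rewrite omegaZ; last exact: uhat_inF.
apply: functional_extensionality => e.
by rewrite omega_basis // !ahatE alt_comp_perm mulrA sgn_mulss mul1r.
Qed.

Lemma omega_usum L : omega (usum N L) = asum L.
Proof.
elim: L => [|q L IH].
  by rewrite usum_nil omega0; apply: functional_extensionality => m; rewrite /asum big_nil.
rewrite usum_cons omega_lin; [| exact: uhat_inF | exact: usum_inF].
rewrite omega_uhat IH.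
by apply: functional_extensionality => m; rewrite /asum big_cons mul1r.
Qed.

End Omega.

Lemma sum_delta_seq (R : pzRingType) (T : eqType) (r : seq T) (F : T -> R) y :
  uniq r -> (F y != 0 -> y \in r) -> \sum_(x <- r) F x * (x == y)%:R = F y.
Proof.
move=> r_uniq y_r; have [Fy0 | /y_r y_in] := eqVneq (F y) 0.
  by rewrite Fy0 big1 // => x _; case: eqP => [-> | _]; rewrite ?Fy0 ?mul0r ?mulr0.
by rewrite (bigD1_seq y) //= eqxx mulr1 big1 ?addr0 // => x /negbTE ->; rewrite mulr0.
Qed.

Section SymmetricSums.
Variables (K : numFieldType) (n : nat).

Lemma sum_lcoef (s : seq (K * exps n)) (G : exps n -> K) (T : seq (exps n)) :
  uniq T -> {subset [seq p.2 | p <- s] <= T} ->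
  \sum_(p <- s) p.1 * G p.2 = \sum_(e <- T) G e * lcoef s e.
Proof.
move=> T_uniq sT; under [RHS]eq_bigr do rewrite /lcoef mulr_sumr.
rewrite exchange_big /=; apply: eq_big_seq => p p_s.
rewrite mulrC -(sum_delta_seq (F := fun e => G e * p.1) (y := p.2) T_uniq) => [|_].
  by apply: eq_bigr => e _; rewrite eq_sym -mulrA [p.1 * _]mulrC.
by rewrite sT ?map_f.
Qed.

Lemma sum_symmetricL (s : seq (K * exps n)) (G : exps n -> K) (w : 'S_n) :
  symmetricL s -> \sum_(p <- s) p.1 * G (comp_perm p.2 w) = \sum_(p <- s) p.1 * G p.2.
Proof.
move=> s_sym; pose sw := [seq (p.1, comp_perm p.2 w) | p <- s].
pose T := undup ([seq p.2 | p <- s] ++ [seq p.2 | p <- sw]).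
have T_uniq : uniq T := undup_uniq _.
have sT : {subset [seq p.2 | p <- s] <= T} by move=> e e_s; rewrite mem_undup mem_cat e_s.
have swT : {subset [seq p.2 | p <- sw] <= T}.
  by move=> e e_sw; rewrite mem_undup mem_cat e_sw orbT.
rewrite -[LHS](big_map (fun p => (p.1, comp_perm p.2 w)) predT (fun p => p.1 * G p.2)).
rewrite (sum_lcoef _ T_uniq swT) (sum_lcoef _ T_uniq sT); apply: eq_bigr => e _.
rewrite -[in RHS](s_sym w^-1%g e) /lcoef big_map; congr (_ * _); apply: eq_bigr => p _.
by rewrite comp_perm_eqV.
Qed.

End SymmetricSums.

Section Shift.
Variables (K : numFieldType) (N n : nat) (s : seq (K * exps n)).
Hypothesis s_sym : symmetricL s.

Definition kshift (k e : exps n) : exps n := [ffun i => k i - N%:Z * e i].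

Definition mul_shift (L : seq (K * exps n)) : seq (K * exps n) :=
  [seq (q.1 * p.1, kshift q.2 p.2) | q <- L, p <- s].

Lemma kshift_comp_perm (k e : exps n) w :
  comp_perm (kshift k e) w = kshift (comp_perm k w) (comp_perm e w).
Proof. by apply/ffunP => i; rewrite !ffunE. Qed.

Section AltShift.
(* [tr e] is the change of index through which multiplication by the monomial
   of exponent [e] acts on coefficient functions indexed by [X]. *)
Variables (X : eqType) (phi : exps n -> X) (tr tr' : exps n -> X -> X).
Hypotheses (trK : forall e, cancel (tr e) (tr' e)) (trKV : forall e, cancel (tr' e) (tr e)).
Hypothesis phi_kshift : forall k e, phi (kshift k e) = tr' e (phi k).

Lemma alt_kshift (k : exps n) x :
  \sum_(p <- s) p.1 * alt K phi k (tr p.2 x) = \sum_(p <- s) p.1 * alt K phi (kshift k p.2) x.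
Proof.
rewrite /alt; under eq_bigr do rewrite mulr_sumr; under [RHS]eq_bigr do rewrite mulr_sumr.
rewrite exchange_big [RHS]exchange_big /=; apply: eq_bigr => w _.
under eq_bigr do rewrite mulrCA; under [RHS]eq_bigr do rewrite mulrCA.
rewrite -!mulr_sumr; congr (_ * _).
under [RHS]eq_bigr => p _.
  rewrite kshift_comp_perm phi_kshift.
  have -> : (x == tr' (comp_perm p.2 w) (phi (comp_perm k w))) =
            (tr (comp_perm p.2 w) x == phi (comp_perm k w)).
    by apply/eqP/eqP => [-> | <-]; rewrite ?trKV ?trK.
  over.
by rewrite (sum_symmetricL (fun e => (tr e x == phi (comp_perm k w))%:R) w s_sym).
Qed.

Lemma alt_comb_kshift (L : seq (K * exps n)) x :
  \sum_(p <- s) p.1 * \sum_(q <- L) q.1 * alt K phi q.2 (tr p.2 x) =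
  \sum_(r <- mul_shift L) r.1 * alt K phi r.2 x.
Proof.
rewrite /mul_shift big_allpairs_dep /=; under eq_bigr do rewrite mulr_sumr.
rewrite exchange_big /=; apply: eq_bigr => q _.
under eq_bigr do rewrite mulrCA; under [RHS]eq_bigr do rewrite -mulrA.
by rewrite -!mulr_sumr alt_kshift.
Qed.

End AltShift.

Lemma mulPx_asum (L : seq (K * exps n)) : mulPx N s (asum L) = asum (mul_shift L).
Proof.
apply: functional_extensionality => m; rewrite /mulPx /asum.
under eq_bigr do under eq_bigr do rewrite ahatE.
under [RHS]eq_bigr do rewrite ahatE.
apply: (alt_comb_kshift (phi := id) (tr := fun e x => [ffun i => x i + N%:Z * e i])
                        (tr' := fun e x => kshift x e) _ _ _ L m).
- by move=> e m'; apply/ffunP => i; rewrite /kshift !ffunE addrK.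
- by move=> e m'; apply/ffunP => i; rewrite /kshift !ffunE subrK.
- by [].
Qed.

Hypothesis N_gt0 : (0 < N)%N.

Lemma mulP_usum (L : seq (K * exps n)) : mulP s (usum N L) = usum N (mul_shift L).
Proof.
apply: functional_extensionality => a; apply: functional_extensionality => c.
rewrite /mulP /usum; under eq_bigr do under eq_bigr do rewrite uhatE.
under [RHS]eq_bigr do rewrite uhatE.
apply: (alt_comb_kshift (phi := @zv_of_exps N n)
                        (tr := fun e x => ([ffun i => x.1 i - e i], x.2))
                        (tr' := fun e x => ([ffun i => x.1 i + e i], x.2)) _ _ _ L (a, c)).
- by move=> e [a' c']; congr (_, _); apply/ffunP => i; rewrite !ffunE subrK.
- by move=> e [a' c']; congr (_, _); apply/ffunP => i; rewrite !ffunE addrK.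
- by move=> k e; congr (_, _); apply/ffunP => i; rewrite !ffunE ?over_shift ?under_shift.
Qed.

End Shift.

Section Decomposition.
Variables (K : numFieldType) (N n : nat).
Hypothesis N_gt0 : (0 < N)%N.

Lemma inF_support_seq (f : tensorFun K n) : inF N f ->
  exists S : seq (exps n * labels n), [/\ uniq S,
    forall a c, f a c != 0 -> (a, c) \in S &
    forall x, x \in S -> forall i, (0 < x.2 i <= N)%N].
Proof.
move=> [[[sa f_fin] f_lab] _].
pose lab (c' : {ffun 'I_n -> 'I_N.+1}) : labels n := [ffun i => val (c' i)].
pose S0 := [seq (a, lab c') | a <- sa, c' <- enum {ffun 'I_n -> 'I_N.+1}].
exists (undup [seq x <- S0 | f x.1 x.2 != 0]); split; first exact: undup_uniq.
  move=> a c fac; rewrite mem_undup mem_filter fac; apply/allpairsP.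
  exists (a, [ffun i => inord (c i)]); rewrite (f_fin a c fac) mem_enum; split=> //.
  congr (_, _); apply/ffunP => i; rewrite !ffunE /= inordK // ltnS.
  by case/andP: (f_lab a c fac i).
by move=> [a c]; rewrite mem_undup mem_filter => /andP[fac _]; apply: f_lab fac.
Qed.

Lemma inF_usum (f : tensorFun K n) : inF N f -> exists L, f = usum N L.
Proof.
move=> f_F; have [S [S_uniq S_supp S_lab]] := inF_support_seq f_F.
exists [seq (f x.1 x.2 / n`!%:R, exps_of_zv N x) | x <- S].
apply: functional_extensionality => a; apply: functional_extensionality => c.
have uhat_S x w : x \in S ->
    ((a, c) == zv_of_exps N (comp_perm (exps_of_zv N x) w)) =
    (x == (comp_perm a w^-1%g, comp_perm c w^-1%g)).
  move=> x_S; rewrite zv_of_exps_comp_perm exps_of_zvK //; last exact: S_lab.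
  by case: x {x_S} => x1 x2; rewrite !xpair_eqE /= (eq_sym a) (eq_sym c) !comp_perm_eqV.
rewrite /usum /= big_map.
under eq_big_seq => x x_S.
  rewrite uhatE /alt mulr_sumr.
  under eq_bigr => w _ do rewrite (uhat_S x w x_S) mulrCA mulrA.
  over.
rewrite exchange_big /=.
transitivity (\sum_(w : 'S_n) f a c / n`!%:R).
  by rewrite sumr_const card_Sn -[RHS]mulr_natr divfK // pnatr_eq0 -lt0n fact_gt0.
apply: eq_bigr => w _.
rewrite (sum_delta_seq (F := fun x => sgn K w * (f x.1 x.2 / n`!%:R)) S_uniq); last first.
  by move=> fw; apply: S_supp; apply: contraNneq fw => ->; rewrite mul0r mulr0.
by rewrite (inF_antisymmetric f_F) sgnV !mulrA sgn_mulss mul1r.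
Qed.

End Decomposition.

Theorem lemma3 (K : numClosedFieldType) (N n : nat) (hN : (0 < N)%N) (hn : (0 < n)%N)
  (s : seq (K * exps n)) (hs : symmetricL s)
  (omega : tensorFun K n -> xpoly K n)
  (hlin : forall f g : tensorFun K n, inF N f -> inF N g -> forall al be : K,
     omega (fun a c => al * f a c + be * g a c) = (fun k => al * omega f k + be * omega g k))
  (hbasis : forall k : exps n, decreasing k -> omega (uhat K N k) = ahat K k)
  (f : tensorFun K n) (hf : inF N f) :
  omega (mulP s f) = mulPx N s (omega f).
Proof.
(* The argument works for n = 0 as well. *)
have [L ->] := inF_usum hN hf.
by rewrite mulP_usum // !(omega_usum hN hlin hbasis) mulPx_asum.
Qed.
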